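(* Let $\alpha$ be irrational. Then, as $n\to\infty$, the Sós permutations $\beta_\alpha$ of $[n]$ satisfy $D(\beta_\alpha)=o(n)$; i.e., $\beta_\alpha$ is quasirandom.
   Context: $[n]=\{1,\dots,n\}$, identified with $\mathbb{Z}_n$; $\{x\}$ is the fractional part of $x$. For irrational $\alpha$, $\beta_\alpha$ is the permutation of $[n]$ with $\beta_\alpha(t)=|\{s\in[n]:\{\alpha s\}\le\{\alpha t\}\}|$. An interval of $\mathbb{Z}_n$ is any subset that is the image of an interval of consecutive integers under the projection $\mathbb{Z}\to\mathbb{Z}_n$ (wrap-around allowed). For $S,T\subseteq\mathbb{Z}_n$, $D_T(S)=\bigl|\,|S\cap T|-|S||T|/n\,\bigr|$, and for a permutation $\sigma$, $D(\sigma)=\max_{I,J}D_J(\sigma(I))$ over all intervals $I,J$. *)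

From HB Require Import structures.
From mathcomp Require Import all_boot all_order all_algebra.
From mathcomp Require Import reals.
Unset Printing Implicit Defensive.
Import Order.TTheory GRing.Theory Num.Theory.
Local Open Scope ring_scope.

Definition fracp {R : realType} (x : R) : R := x - (Num.floor x)%:~R.

(* Points of [n] = {1,...,n} are represented by i : 'I_n, standing for i+1.
   This is the identification [n] ~ Z_n via t |-> t - 1 (a translation of the
   identification t |-> t mod n, which does not change the family of intervals). *)

Definition sos_val {R : realType} (alpha : R) (n : nat) (i : 'I_n) : nat :=
  #|[set j : 'I_n | fracp (alpha * (j.+1)%:R) <= fracp (alpha * (i.+1)%:R)]|.

(* the Sos permutation as a map 'I_n -> 'I_n (value beta(t) - 1); the default
   of insubd is never used since 1 <= beta(t) <= n *)
Definition sos_perm {R : realType} (alpha : R) (n : nat) (i : 'I_n) : 'I_n :=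
  insubd i (sos_val alpha n i).-1.

Definition cint (n a len : nat) : {set 'I_n} :=
  [set x : 'I_n | [exists k : 'I_len, (x : nat) == ((a + k) %% n)%N]].

Definition Dset {R : realType} (n : nat) (S T : {set 'I_n}) : R :=
  `| (#|S :&: T|)%:R - (#|S|)%:R * (#|T|)%:R / n%:R |.

(* D(sigma) = max over intervals I, J of D_J(sigma(I)); every interval of Z_n
   equals some cint n a len with a < n and len <= n. *)
Definition Dperm {R : realType} (n : nat) (sigma : 'I_n -> 'I_n) : R :=
  \big[Num.max/0]_(a < n) \big[Num.max/0]_(l < n.+1)
   \big[Num.max/0]_(b < n) \big[Num.max/0]_(m < n.+1)
     Dset n (sigma @: cint n a l) (cint n b m).

(* The key estimate is a discrepancy bound for {g + k alpha}, uniform in g: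
   the number of k < L with {g + k alpha} < x equals L x + T(g - x) - T(g),
   where T(g) = sum_(k < L) {g + k alpha}, so it suffices that T varies little
   with g.  Shifting g by a Dirichlet approximation h = |q alpha - p| < e
   changes T by at most q, hence T(g') - T(g) <= q / h + L h = o(L).
   As beta_alpha(t) - 1 is the rank of {alpha t}, it lies within o(n) of
   n {alpha t}, so #{t < u | beta_alpha(t) <= v} = u v / n + o(n).  Every
   interval of Z_n is a signed sum of three prefixes, hence D(beta_alpha) is
   at most nine such errors. *)

From HB Require Import structures.
From mathcomp Require Import all_boot all_order all_algebra.
From mathcomp Require Import reals.
From mathcomp Require Import ring lra zify.
Import Order.TTheory GRing.Theory Num.Theory.
Local Open Scope ring_scope.

Section FractionalPart.
Context {R : realType}.
Implicit Types (x y s : R) (z : int).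

Lemma fracp_ge0 y : 0 <= fracp y.
Proof. by rewrite /fracp subr_ge0 floor_le. Qed.

Lemma fracp_lt1 y : fracp y < 1.
Proof. by have := floorD1_gt y; rewrite /fracp intrD; lra. Qed.

Lemma fracpDz y z : fracp (y + z%:~R) = fracp y.
Proof. by rewrite /fracp floorDrz ?intr_int // intrKfloor intrD; ring. Qed.

Lemma fracpDr_le y s : 0 <= s -> fracp (y + s) <= fracp y + s.
Proof.
move=> s_ge0; have : Num.floor y <= Num.floor (y + s) by apply: le_floor; lra.
by rewrite /fracp -(ler_int R); lra.
Qed.

Lemma lt_fracpE y x : 0 <= x <= 1 ->
  (fracp y < x)%R%:R = x + fracp (y - x) - fracp y.
Proof.
move=> /andP[x_ge0 x_le1]; have /andP[fl_le fl_gt] := floor_itv y.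
rewrite intrD in fl_gt; rewrite /fracp; case: ltP => hx.
- have -> : Num.floor (y - x) = Num.floor y - 1.
    by apply: floor_def; rewrite subrK intrB; rewrite /fracp in hx; lra.
  by rewrite intrB /=; ring.
- have -> : Num.floor (y - x) = Num.floor y.
    by apply: floor_def; rewrite intrD; rewrite /fracp in hx; lra.
  by rewrite /=; ring.
Qed.

End FractionalPart.

Section Equidistribution.
Context {R : realType}.
Variable a : R.
Implicit Types (g x y : R) (L : nat).

Definition frac_sum g L : R := \sum_(0 <= k < L) fracp (g + k%:R * a).

Definition frac_count g x L : R :=
  \sum_(0 <= k < L) (fracp (g + k%:R * a) < x)%R%:R.

Lemma frac_countE g x L : 0 <= x <= 1 ->
  frac_count g x L = L%:R * x + frac_sum (g - x) L - frac_sum g L.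
Proof.
move=> x01; rewrite /frac_count /frac_sum.
rewrite (eq_bigr (fun k => x + fracp (g - x + k%:R * a) - fracp (g + k%:R * a))).
  by rewrite sumrB big_split /= sumr_const_nat subn0 mulr_natl.
by move=> k _; rewrite lt_fracpE // (_ : g + k%:R * a - x = g - x + k%:R * a); ring.
Qed.

Lemma frac_count_ge0 g x L : 0 <= frac_count g x L.
Proof. by apply: sumr_ge0 => k _; rewrite ler0n. Qed.

Lemma frac_count_le g x L : frac_count g x L <= L%:R.
Proof.
rewrite -[L in _ <= L%:R]subn0 -sumr_const_nat.
by apply: ler_sum => k _; case: (_ < _)%R.
Qed.

Lemma frac_sumDz g (z : int) L : frac_sum (g + z%:~R) L = frac_sum g L.
Proof.
apply: eq_bigr => k _; rewrite -[RHS](fracpDz (g + k%:R * a) z).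
by congr fracp; ring.
Qed.

Lemma frac_sumDr_le g s L : 0 <= s ->
  frac_sum (g + s) L <= frac_sum g L + L%:R * s.
Proof.
move=> s_ge0.
apply: (@le_trans _ _ (\sum_(0 <= k < L) (fracp (g + k%:R * a) + s))).
  apply: ler_sum => k _.
  by rewrite (_ : g + s + k%:R * a = g + k%:R * a + s) ?fracpDr_le //; ring.
by rewrite big_split /= sumr_const_nat subn0 mulr_natl.
Qed.

Lemma frac_sum_natmulD g (q : nat) L :
  `|frac_sum (g + q%:R * a) L - frac_sum g L| <= q%:R.
Proof.
pose F k := fracp (g + k%:R * a).
have range_ge0 m p : 0 <= \sum_(m <= k < p) F k.
  by apply: sumr_ge0 => k _; apply: fracp_ge0.
have range_le m p : \sum_(m <= k < p) F k <= (p - m)%:R.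
  rewrite -sumr_const_nat; apply: ler_sum => k _; exact/ltW/fracp_lt1.
have -> : frac_sum (g + q%:R * a) L = \sum_(q <= k < L + q) F k.
  rewrite /frac_sum -{2}[q]add0n big_addn addnK.
  by apply: eq_bigr => k _; rewrite /F natrD; congr fracp; ring.
have split_q : \sum_(0 <= k < L + q) F k =
    \sum_(0 <= k < q) F k + \sum_(q <= k < L + q) F k.
  exact: big_cat_nat (leq0n q) (leq_addl L q).
have split_L : \sum_(0 <= k < L + q) F k =
    \sum_(0 <= k < L) F k + \sum_(L <= k < L + q) F k.
  exact: big_cat_nat (leq0n L) (leq_addr q L).
have := range_ge0 0 q; have := range_le 0 q.
have := range_ge0 L (L + q); have := range_le L (L + q).
by rewrite subn0 addKn /frac_sum -/F ler_norml; lra.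
Qed.

Lemma frac_sum_step g (q : nat) (p : int) L :
  frac_sum (g + `|q%:R * a - p%:~R|) L <= frac_sum g L + q%:R.
Proof.
have [h_ge0|h_lt0] := lerP 0 (q%:R * a - p%:~R).
- rewrite ger0_norm // (_ : g + _ = g + q%:R * a + (- p)%:~R); last first.
    by rewrite intrN; ring.
  by rewrite frac_sumDz; have := frac_sum_natmulD g q L; rewrite ler_norml; lra.
- rewrite ltr0_norm // -(frac_sumDz _ (- p)).
  have := frac_sum_natmulD (g - (q%:R * a - p%:~R) + (- p)%:~R) q L.
  rewrite (_ : _ + _ + q%:R * a = g); last by rewrite intrN; ring.
  by rewrite ler_norml; lra.
Qed.

(* Modulo 1, [g'] is reached from [g] by at most [1/h] steps of size [h]
   followed by a shift smaller than [h]. *)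
Lemma frac_sum_oscillation (h : R) (q : nat) L :
  0 < h -> (forall y, frac_sum (y + h) L <= frac_sum y L + q%:R) ->
  forall g g', frac_sum g' L <= frac_sum g L + q%:R / h + L%:R * h.
Proof.
move=> h_gt0 step g g'.
have iter j y : frac_sum (y + j%:R * h) L <= frac_sum y L + j%:R * q%:R.
  elim: j y => [|j IH] y; first by rewrite !mul0r !addr0.
  have := step (y + j%:R * h); have := IH y; rewrite -natr1.
  by rewrite (_ : y + (j%:R + 1) * h = y + j%:R * h + h); [lra | ring].
set d := g' - g; set j := Num.truncn (fracp d / h).
have := fracp_lt1 d; have := fracp_ge0 d => frac_ge0 frac_lt1.
have jh_le : j%:R * h <= fracp d.
  by rewrite -ler_pdivlMr // truncn_le divr_ge0 // ltW.
have jh_gt : fracp d < j%:R * h + h.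
  rewrite (_ : _ + h = j.+1%:R * h); last by rewrite -natr1; ring.
  rewrite -ltr_pdivrMr //.
  exact: truncnS_gt.
set s := fracp d - j%:R * h.
have -> : g' = g + j%:R * h + s + (Num.floor d)%:~R by rewrite /s /fracp /d; ring.
rewrite frac_sumDz.
have s_ge0 : 0 <= s by rewrite /s subr_ge0.
have := frac_sumDr_le (g + j%:R * h) s L s_ge0.
have := iter j g.
have : j%:R * q%:R <= q%:R / h.
  by rewrite ler_pdivlMr // mulrAC ler_piMl //; lra.
have : L%:R * s <= L%:R * h by rewrite ler_wpM2l // /s; lra.
lra.
Qed.

Lemma fracp_natmulB (k1 k2 : nat) : (k1 <= k2)%N ->
  (k2 - k1)%:R * a - (Num.floor (k2%:R * a) - Num.floor (k1%:R * a))%:~R =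
  fracp (k2%:R * a) - fracp (k1%:R * a).
Proof. by move=> le12; rewrite natrB // intrB /fracp; ring. Qed.

Hypothesis a_irr : forall r : rat, a != ratr r.

Lemma natmul_irr_eq_int (q : nat) (p : int) : q%:R * a = p%:~R -> q = 0%N.
Proof.
move=> qa_int; apply/eqP/negPn/negP => q_neq0.
have qR_neq0 : q%:R != 0 :> R by rewrite pnatr_eq0.
have := a_irr (p%:~R / q%:R).
by rewrite fmorph_div rmorph_int rmorph_nat -qa_int mulrC mulKf // eqxx.
Qed.

Lemma fracp_natmul_inj : injective (fun k : nat => fracp (k%:R * a)).
Proof.
move=> k1 k2 /= eq12; wlog le12 : k1 k2 eq12 / (k1 <= k2)%N.
  by move=> W; case/orP: (leq_total k1 k2) => ?; [|symmetry]; apply: W.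
apply/eqP; rewrite eqn_leq le12 -subn_eq0; apply/eqP.
apply: (@natmul_irr_eq_int _ (Num.floor (k2%:R * a) - Num.floor (k1%:R * a))).
by apply/eqP; rewrite -subr_eq0 fracp_natmulB // eq12 subrr.
Qed.

(* Dirichlet's pigeonhole argument: two of the [K + 1] points [{k a}],
   [k <= K], share one of the [K] bins [[i/K, (i+1)/K)]. *)
Lemma dirichlet_approx (d : R) : 0 < d ->
  exists (q : nat) (p : int), 0 < `|q%:R * a - p%:~R| < d.
Proof.
move=> d_gt0; pose K := (Num.truncn d^-1).+1.
have K_gt0 : 0 < K%:R :> R by rewrite ltr0n.
have binP (k : 'I_K.+1) : (Num.truncn (K%:R * fracp (k%:R * a)) < K)%N.
  rewrite truncn_lt_nat ?mulr_ge0 ?fracp_ge0 ?ltW //.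
  by rewrite -[X in _ < X]mulr1 ltr_pM2l // fracp_lt1.
have /injectivePn [k1 [k2 k12 bin12]] : ~~ injectiveb (fun k => Ordinal (binP k)).
  by apply/injectiveP => /leq_card; rewrite !card_ord ltnn.
have close : `|fracp (k2%:R * a) - fracp (k1%:R * a)| < d.
  move/(congr1 val): bin12 => /= bin12.
  have := truncn_itv (mulr_ge0 (ltW K_gt0) (fracp_ge0 (k1%:R * a))).
  have := truncn_itv (mulr_ge0 (ltW K_gt0) (fracp_ge0 (k2%:R * a))).
  rewrite bin12; set t := Num.truncn _; rewrite -[t.+1%:R]natr1.
  move=> /andP[lo2 hi2] /andP[lo1 hi1].
  have : K%:R * `|fracp (k2%:R * a) - fracp (k1%:R * a)| < 1.
    by rewrite -[K%:R]ger0_norm ?ltW // -normrM mulrBr ltr_norml; lra.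
  rewrite -ltr_pdivlMl // mulr1 => /lt_le_trans; apply.
  rewrite -[d in _ <= d]invrK lef_pV2 ?posrE ?invr_gt0 //.
  exact: ltW (truncnS_gt _).
clear bin12; wlog lt12 : k1 k2 k12 close / (k1 < k2)%N.
  move=> W; case: (ltngtP k1 k2) => [lt12|lt21|/val_inj eq12].
  - exact: (W k1 k2).
  - by apply: (W k2 k1); [rewrite eq_sym | rewrite distrC | ].
  - by rewrite eq12 eqxx in k12.
exists (k2 - k1)%N, (Num.floor (k2%:R * a) - Num.floor (k1%:R * a)).
rewrite fracp_natmulB ?(ltnW lt12) // close andbT normr_gt0.
rewrite -fracp_natmulB ?(ltnW lt12) // subr_eq0.
by apply: contraTneq lt12 => /natmul_irr_eq_int /eqP; rewrite subn_eq0 -leqNgt.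
Qed.

Lemma frac_count_discrepancy (e : R) : 0 < e ->
  exists N : nat, forall L g x, (N <= L)%N -> 0 <= x <= 1 ->
    `|frac_count g x L - L%:R * x| <= e * L%:R.
Proof.
move=> e_gt0.
have [q [p /andP[h_gt0 h_lt]]] := dirichlet_approx (e / 2) (ltac:(lra)).
set h := `|q%:R * a - p%:~R| in h_gt0 h_lt.
pose r := 2 * q%:R / (h * e).
exists (Num.truncn r).+1 => L g x L_ge x01.
have r_lt : r < L%:R by apply: lt_le_trans (truncnS_gt r) _; rewrite ler_nat.
have qh_le : q%:R / h <= e * L%:R / 2.
  have -> : q%:R / h = r * e / 2 by rewrite /r; field; rewrite !gt_eqF.
  have : r * e <= L%:R * e by rewrite ler_pM2r // ltW.
  lra.
have Lh_le : L%:R * h <= e * L%:R / 2.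
  have : 0 <= L%:R :> R by [].
  nra.
have osc := frac_sum_oscillation h q L h_gt0 (fun y => frac_sum_step y q p L).
have := osc g (g - x); have := osc (g - x) g.
by rewrite frac_countE // ler_norml; lra.
Qed.

Lemma frac_count_discrepancy_le (e : R) : 0 < e ->
  exists N : nat, forall n L g x, (N <= n)%N -> (L <= n)%N -> 0 <= x <= 1 ->
    `|frac_count g x L - L%:R * x| <= e * n%:R.
Proof.
move=> e_gt0; have [N0 discr] := frac_count_discrepancy e e_gt0.
exists (Num.truncn (N0%:R / e)).+1 => n L g x n_ge L_le x01.
have N0_le : N0%:R <= e * n%:R.
  have : N0%:R / e < n%:R by apply: lt_le_trans (truncnS_gt _) _; rewrite ler_nat.
  by rewrite ltr_pdivrMr // mulrC => /ltW.
have [L_small|L_large] := ltnP L N0.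
- have : L%:R <= N0%:R :> R by rewrite ler_nat ltnW.
  have := frac_count_ge0 g x L; have := frac_count_le g x L.
  have : 0 <= L%:R * x <= L%:R.
    by case/andP: x01 => x_ge0 x_le1; rewrite mulr_ge0 // ler_piMr.
  by rewrite ler_norml => /andP[]; lra.
- apply: le_trans (discr L g x L_large x01) _.
  by rewrite ler_pM2l // ler_nat.
Qed.

End Equidistribution.

Lemma natr_card_set {R : pzSemiRingType} (T : finType) (S : {set T}) :
  #|S|%:R = \sum_x (x \in S)%:R :> R.
Proof.
rewrite -sum1_card natr_sum big_mkcond /=.
by apply: eq_bigr => x _; case: (x \in S).
Qed.

Lemma ler_natr_div1 {R : realFieldType} {m n : nat} : (m <= n)%N ->
  m%:R / n%:R <= 1 :> R.
Proof.
case: n => [|n] m_le; first by rewrite invr0 mulr0.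
by rewrite ler_pdivrMr ?ltr0n // mul1r ler_nat.
Qed.

Section Rank.
Context {R : realFieldType} {n : nat}.
Implicit Types (u v : nat) (x : R) (P Q : pred 'I_n).

Definition prefix_count u P : R := \sum_(t : 'I_n) (t < u)%:R * (P t)%:R.

Lemma sum_prefix (F : nat -> R) u : (u <= n)%N ->
  \sum_(t : 'I_n) (t < u)%:R * F t = \sum_(0 <= k < u) F k.
Proof.
move=> u_le; rewrite big_mkord (big_ord_widen n F u_le) [RHS]big_mkcond /=.
by apply: eq_bigr => t _; case: ltnP; rewrite ?mul1r ?mul0r.
Qed.

Lemma sum_lt_ord u : (u <= n)%N -> \sum_(t : 'I_n) (t < u)%:R = u%:R :> R.
Proof.
move=> u_le; transitivity (\sum_(0 <= k < u) (1 : R)).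
  by rewrite -sum_prefix //; apply: eq_bigr => t _; rewrite mulr1.
by rewrite sumr_const_nat subn0.
Qed.

Lemma prefix_count0 P : prefix_count 0 P = 0.
Proof. by rewrite /prefix_count big1 // => t _; rewrite ltn0 mul0r. Qed.

Lemma prefix_count_ge0 u P : 0 <= prefix_count u P.
Proof. by apply: sumr_ge0 => t _; rewrite mulr_ge0. Qed.

Lemma prefix_count_le u P : (u <= n)%N -> prefix_count u P <= u%:R.
Proof.
move=> u_le; rewrite -sum_lt_ord //; apply: ler_sum => t _.
by rewrite ler_piMr //; case: (P t).
Qed.

Lemma prefix_count_subset u P Q : (forall t, P t -> Q t) ->
  prefix_count u P <= prefix_count u Q.
Proof.
move=> PQ; apply: ler_sum => t _; rewrite ler_wpM2l //.
by case/boolP: (P t) => [/PQ ->|_]; rewrite ?ler0n.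
Qed.

Variable f : 'I_n -> R.

Definition rank (t : 'I_n) : nat := #|[set s | f s < f t]|.

Lemma rank_lt t : (rank t < n)%N.
Proof.
rewrite -[n]card_ord -cardsT /rank; apply/proper_card/properP; split.
  exact: subsetT.
by exists t; rewrite ?inE ?ltxx.
Qed.

Lemma rank_mono {s t} : f s < f t -> (rank s < rank t)%N.
Proof.
move=> lt_st; apply/proper_card/properP; split.
  by apply/subsetP => r; rewrite !inE => /lt_trans; apply.
by exists s; rewrite !inE ?lt_st ?ltxx.
Qed.

Lemma rank_inj : injective f -> injective rank.
Proof.
move=> f_inj s t eq_st; case: (ltgtP (f s) (f t)) => [lt_st|lt_ts|/f_inj //].
- by have := rank_mono lt_st; rewrite eq_st ltnn.
- by have := rank_mono lt_ts; rewrite eq_st ltnn.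
Qed.

Lemma natr_rank t : (rank t)%:R = prefix_count n (fun s => f s < f t).
Proof.
rewrite /rank natr_card_set; apply: eq_bigr => s _.
by rewrite ltn_ord mul1r inE.
Qed.

Variable E : R.
Hypothesis f_discr : forall u x, (u <= n)%N -> 0 <= x <= 1 ->
  `|prefix_count u (fun t => f t < x) - u%:R * x| <= E.

Lemma discr_bound_ge0 : 0 <= E.
Proof.
have := f_discr 0 0 (leq0n n).
by rewrite lexx ler01 mul0r subr0 prefix_count0 normr0; apply.
Qed.

Lemma prefix_count_lt_ge u x : (u <= n)%N -> x <= 1 ->
  u%:R * x - E <= prefix_count u (fun t => f t < x).
Proof.
move=> u_le x_le1; have := prefix_count_ge0 u (fun t => f t < x).
have := discr_bound_ge0; have [x_lt0|x_ge0] := ltP x 0.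
  have : u%:R * x <= 0 by rewrite mulr_ge0_le0 // ltW.
  lra.
have := f_discr u x u_le; rewrite x_ge0 x_le1 ler_norml.
by move=> /(_ isT) /andP[]; lra.
Qed.

Lemma prefix_count_lt_le u x : (u <= n)%N -> 0 <= x ->
  prefix_count u (fun t => f t < x) <= u%:R * x + E.
Proof.
move=> u_le x_ge0; have := prefix_count_le u (fun t => f t < x) u_le.
have := discr_bound_ge0; have [x_gt1|x_le1] := ltP 1 x.
  have : u%:R <= u%:R * x by rewrite ler_peMr // ltW.
  lra.
have := f_discr u x u_le; rewrite x_ge0 x_le1 ler_norml.
by move=> /(_ isT) /andP[]; lra.
Qed.

Hypothesis f_unit : forall t, 0 <= f t <= 1.

(* Each rank is within [E] of [n f t], so [rank t < v] is sandwiched between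
   [f t < (v - E) / n] and [f t < (v + E) / n]. *)
Lemma rank_prefix_discrepancy u v : (u <= n)%N -> (v <= n)%N ->
  `|prefix_count u (fun t => rank t < v)%N - u%:R * v%:R / n%:R| <= 2 * E.
Proof.
move=> u_le v_le; have E_ge0 := discr_bound_ge0.
have rank_close t : `|(rank t)%:R - n%:R * f t| <= E.
  by rewrite natr_rank; apply: f_discr; rewrite ?f_unit.
pose x1 := (v%:R - E) / n%:R; have x1E : x1 = (v%:R - E) / n%:R by [].
pose x2 := (v%:R + E) / n%:R; have x2E : x2 = (v%:R + E) / n%:R by [].
clearbody x1 x2.
have lower : prefix_count u (fun t => f t < x1) <=
             prefix_count u (fun t => rank t < v)%N.
  apply: prefix_count_subset => t lt_x1; rewrite -(ltr_nat R).
  have n_gt0 : 0 < n%:R :> R by rewrite ltr0n (leq_ltn_trans _ (ltn_ord t)).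
  have : n%:R * f t < v%:R - E.
    by rewrite mulrC -ltr_pdivlMr ?n_gt0 // -x1E.
  by have := rank_close t; rewrite ler_norml => /andP[]; lra.
have upper : prefix_count u (fun t => rank t < v)%N <=
             prefix_count u (fun t => f t < x2).
  apply: prefix_count_subset => t; rewrite -(ltr_nat R) => lt_v.
  have n_gt0 : 0 < n%:R :> R by rewrite ltr0n (leq_ltn_trans _ (ltn_ord t)).
  rewrite x2E ltr_pdivlMr ?n_gt0 // mulrC.
  by have := rank_close t; rewrite ler_norml => /andP[]; lra.
have x1_le1 : x1 <= 1.
  rewrite x1E; apply: le_trans (ler_natr_div1 v_le).
  by rewrite ler_wpM2r ?invr_ge0 //; lra.
have x2_ge0 : 0 <= x2 by rewrite x2E divr_ge0 ?addr_ge0.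
have := prefix_count_lt_ge u x1 u_le x1_le1.
have := prefix_count_lt_le u x2 u_le x2_ge0.
have -> : u%:R * x1 = u%:R * v%:R / n%:R - u%:R / n%:R * E by rewrite x1E; ring.
have -> : u%:R * x2 = u%:R * v%:R / n%:R + u%:R / n%:R * E by rewrite x2E; ring.
have : u%:R / n%:R * E <= E by rewrite ler_piMl ?ler_natr_div1.
by rewrite ler_norml; lra.
Qed.

End Rank.

Lemma modn_lt_double (y n : nat) : (y < n + n)%N ->
  (y %% n = if y < n then y else y - n)%N.
Proof.
move=> y_lt; case: ltnP => y_n; first by rewrite modn_small.
by rewrite -[y](subnK y_n) modnDr modn_small ?addnK //; lia.
Qed.

Lemma mem_cint (n a l : nat) (x : 'I_n) : (a < n)%N -> (l <= n)%N ->
  (x \in cint n a l) =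
  (if a + l <= n then a <= x < a + l else (a <= x) || (x < a + l - n))%N.
Proof.
case: x => x x_lt /= a_lt l_le; rewrite inE; apply/existsP/idP.
- case=> k /eqP /= ->; have k_lt := ltn_ord k.
  by rewrite modn_lt_double; [case: ifP; case: ifP => /=; lia | lia].
- case: ifP => al_le x_in.
    have k_lt : (x - a < l)%N by lia.
    by exists (Ordinal k_lt); apply/eqP => /=; rewrite modn_small; lia.
  have [a_le|x_lt_a] := leqP a x.
    have k_lt : (x - a < l)%N by lia.
    by exists (Ordinal k_lt); apply/eqP => /=; rewrite modn_small; lia.
  have k_lt : (x + n - a < l)%N by lia.
  exists (Ordinal k_lt); apply/eqP => /=.
  by rewrite modn_lt_double; [case: ifP|]; lia.
Qed.

Lemma card_imset_cap {R : pzSemiRingType} (T : finType) (f : T -> T)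
    (A B : {set T}) : injective f ->
  #|f @: A :&: B|%:R = \sum_t (t \in A)%:R * (f t \in B)%:R :> R.
Proof.
move=> f_inj; rewrite natr_card_set (reindex_inj f_inj); apply: eq_bigr => t _.
rewrite inE mem_imset //.
by case: (t \in A); case: (f t \in B); rewrite ?mul1r ?mul0r.
Qed.

Section Intervals.
Context {R : realType} {n : nat}.

Lemma cint_indicatorE (a l : nat) (t : 'I_n) : (a < n)%N -> (l <= n)%N ->
  (t \in cint n a l)%:R =
  (t < minn (a + l) n)%:R - (t < a)%:R + (t < a + l - n)%:R :> R.
Proof.
move=> a_lt l_le; rewrite mem_cint //; have := ltn_ord t.
case: (leqP (a + l) n) => ?; case: (leqP a t) => ?; case: (ltnP t (a + l)) => ?;
  case: (ltnP t (a + l - n)) => ?; case: (ltnP t (minn (a + l) n)) => ? ?;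
  try (exfalso; lia); rewrite /= ?ltn_ord ?(mulr1n, mulr0n); ring.
Qed.

Lemma card_cint (a l : nat) : (a < n)%N -> (l <= n)%N ->
  #|cint n a l|%:R = (minn (a + l) n)%:R - a%:R + (a + l - n)%:R :> R.
Proof.
move=> a_lt l_le.
rewrite natr_card_set; under eq_bigr => t _ do rewrite cint_indicatorE //.
by rewrite big_split sumrB /= !sum_lt_ord ?geq_minr ?(ltnW a_lt) //; lia.
Qed.

Variables (sigma : 'I_n -> 'I_n) (E : R).
Hypothesis sigma_inj : injective sigma.
Hypothesis sigma_discr : forall {u v}, (u <= n)%N -> (v <= n)%N ->
  `|prefix_count u (fun t => sigma t < v)%N - u%:R * v%:R / n%:R| <= E.

Lemma Dset_cint_le (a l b m : nat) :
  (a < n)%N -> (l <= n)%N -> (b < n)%N -> (m <= n)%N ->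
  Dset n (sigma @: cint n a l) (cint n b m) <= 9 * E.
Proof.
move=> a_lt l_le b_lt m_le.
set u1 := minn (a + l)%N n; set u3 := (a + l - n)%N.
set v1 := minn (b + m)%N n; set v3 := (b + m - n)%N.
have [u1_le v1_le] : (u1 <= n)%N /\ (v1 <= n)%N by rewrite !geq_minr.
have [u3_le v3_le] : (u3 <= n)%N /\ (v3 <= n)%N by split; lia.
have [a_le b_le] : (a <= n)%N /\ (b <= n)%N by split; apply: ltnW.
pose Q u v := prefix_count u (fun t => sigma t < v)%N : R.
have capE : #|sigma @: cint n a l :&: cint n b m|%:R =
    Q u1 v1 - Q u1 b + Q u1 v3 - Q a v1 + Q a b - Q a v3
  + Q u3 v1 - Q u3 b + Q u3 v3.
  rewrite card_imset_cap //; under eq_bigr => t _ do rewrite !cint_indicatorE //.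
  rewrite -/u1 -/u3 -/v1 -/v3 /Q /prefix_count.
  do 8 (rewrite -sumrB || rewrite -big_split).
  by apply: eq_bigr => t _ /=; ring.
rewrite /Dset card_imset // capE !card_cint // -/u1 -/u3 -/v1 -/v3.
move: (sigma_discr u1_le v1_le) (sigma_discr u1_le b_le) (sigma_discr u1_le v3_le).
move: (sigma_discr a_le v1_le) (sigma_discr a_le b_le) (sigma_discr a_le v3_le).
move: (sigma_discr u3_le v1_le) (sigma_discr u3_le b_le) (sigma_discr u3_le v3_le).
rewrite -!/(Q _ _) !ler_norml.
have -> : (u1%:R - a%:R + u3%:R) * (v1%:R - b%:R + v3%:R) / n%:R =
    u1%:R * v1%:R / n%:R - u1%:R * b%:R / n%:R + u1%:R * v3%:R / n%:R
  - a%:R * v1%:R / n%:R + a%:R * b%:R / n%:R - a%:R * v3%:R / n%:R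
  + u3%:R * v1%:R / n%:R - u3%:R * b%:R / n%:R + u3%:R * v3%:R / n%:R :> R.
  by ring.
clearbody Q; do 9 case/andP => ? ?.
by apply/andP; split; lra.
Qed.

Lemma Dperm_le : Dperm n sigma <= 9 * E.
Proof.
have E_ge0 : 0 <= E.
  have := sigma_discr (leq0n n) (leq0n n).
  by rewrite prefix_count0 !mul0r subrr normr0.
have bound_ge0 : 0 <= 9 * E by rewrite mulr_ge0.
apply: bigmax_le => // a _; apply: bigmax_le => // l _.
apply: bigmax_le => // b _; apply: bigmax_le => // m _.
by apply: Dset_cint_le; rewrite // -ltnS.
Qed.

End Intervals.

Section Sos.
Context {R : realType}.
Variables (alpha : R) (n : nat).

Definition sos_frac (i : 'I_n) : R := fracp (alpha * i.+1%:R).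

Lemma sos_frac_unit i : 0 <= sos_frac i <= 1.
Proof. by rewrite fracp_ge0 ltW ?fracp_lt1. Qed.

Lemma sos_frac_prefix_count u x : (u <= n)%N ->
  prefix_count u (fun t => sos_frac t < x) = frac_count alpha alpha x u.
Proof.
move=> u_le; rewrite /prefix_count.
rewrite (sum_prefix (fun k => (fracp (alpha * k.+1%:R) < x)%R%:R)) //.
apply: eq_bigr => k _.
by rewrite /sos_frac -natr1 (_ : alpha * _ = alpha + k%:R * alpha) //; ring.
Qed.

Hypothesis alpha_irr : forall r : rat, alpha != ratr r.

Lemma sos_frac_inj : injective sos_frac.
Proof.
move=> i j; rewrite /sos_frac !(mulrC alpha).
by move=> /(fracp_natmul_inj _ alpha_irr) [] /val_inj.
Qed.

Lemma sos_valE i : sos_val alpha n i = (rank sos_frac i).+1.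
Proof.
rewrite /sos_val.
have -> : [set j : 'I_n | fracp (alpha * j.+1%:R) <= fracp (alpha * i.+1%:R)]
          = i |: [set j | sos_frac j < sos_frac i].
  by apply/setP => j; rewrite !inE le_eqVlt (inj_eq sos_frac_inj).
by rewrite cardsU1 inE ltxx.
Qed.

Lemma sos_permE i : val (sos_perm alpha n i) = rank sos_frac i.
Proof. by rewrite /sos_perm val_insubd sos_valE /= rank_lt. Qed.

Lemma sos_perm_inj : injective (sos_perm alpha n).
Proof.
by move=> i j /(congr1 val); rewrite !sos_permE => /(rank_inj _ sos_frac_inj).
Qed.

Lemma sos_perm_prefix_count u v :
  prefix_count u (fun t => sos_perm alpha n t < v)%N =
  prefix_count u (fun t => rank sos_frac t < v)%N :> R.
Proof. by apply: eq_bigr => t _; rewrite sos_permE. Qed.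

End Sos.

Theorem mainTheorem12 (R : realType) (alpha : R)
  (irr : forall q : rat, alpha != ratr q) :
  forall eps : R, 0 < eps ->
  exists N : nat, forall n : nat, (N <= n)%N ->
    Dperm n (sos_perm alpha n) <= eps * n%:R.
Proof.
move=> eps eps_gt0.
have [N frac_discr] := frac_count_discrepancy_le _ irr (eps / 18) (ltac:(lra)).
exists N => n N_le.
have point_discr u x : (u <= n)%N -> 0 <= x <= 1 ->
    `|prefix_count u (fun t => sos_frac alpha n t < x) - u%:R * x|
    <= eps / 18 * n%:R.
  by move=> u_le x01; rewrite sos_frac_prefix_count //; apply: frac_discr.
have rank_discr := rank_prefix_discrepancy _ _ point_discr (sos_frac_unit alpha n).
apply: le_trans (Dperm_le _ (2 * (eps / 18 * n%:R)) (sos_perm_inj _ _ irr) _) _.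
- by move=> u v u_le v_le; rewrite sos_perm_prefix_count //; apply: rank_discr.
- lra.
Qed.
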